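(* For every constant $0<\delta<1/\mathrm{e}$ there exist a constant $c>0$ and $k_0$ such that for all $k\ge k_0$, when $k$ nodes of a one-hop radio network without collision detection all receive a message at time $0$ and each runs protocol Exp Back-on/Back-off with parameter $\delta$, all $k$ messages are delivered within $4(1+1/\delta)k$ communication steps with probability at least $1-1/k^{c}$.
   Context: Model (one-hop Radio Network without collision detection): time is divided into synchronous communication steps. A node holding an undelivered message is active. In each step each active node may transmit. If exactly one node transmits, its message is delivered and that node becomes idle, never transmitting again. If zero or at least two nodes transmit, nobody receives anything, and nodes cannot distinguish these cases. Nodes know neither $k$ nor the total number of nodes. All $k$ nodes start simultaneously. Protocol Exp Back-on/Back-off with parameter $\delta$: all nodes use the same common sequence of consecutive windows of time steps. For $i=1,2,\dots$ (a phase), set $w\leftarrow2^i$; while $w\ge1$: the next window consists of the next $w$ steps (with $w$ rounded to an integer), each still-active node chooses one step of this window uniformly at random, independently of the others, and transmits in that step only; then $w\leftarrow w(1-\delta)$. *)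

From Stdlib Require Import Reals List Arith ZArith Bool.
Import ListNotations.
Open Scope R_scope.

(* floor of a real as a nat (Int_part r = up r - 1 is the floor). *)
Definition nfloor (r : R) : nat := Z.to_nat (Int_part r).

(* Windows of one phase, starting from real size w:
   while w >= 1, emit a window of length floor(w), then w <- w(1-delta).
   [fuel] bounds the number of windows; it is only used with a fuel that is
   at least the number of steps under consideration (every window has >= 1
   step), so truncation never affects the first [fuel] steps. *)
Fixpoint phase_windows (delta w : R) (fuel : nat) : list nat :=
  match fuel with
  | O => []
  | S f => if Rle_dec 1 w then nfloor w :: phase_windows delta (w * (1 - delta)) f
           else []
  end.

(* Common window schedule restricted to what matters for the first T steps:
   phases i = 1..T (each phase has >= 1 step), each with w starting at 2^i. *)
Definition schedule (delta : R) (T : nat) : list nat :=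
  flat_map (fun i => phase_windows delta (2 ^ i) T) (seq 1 T).

(* All choice vectors of m active nodes, each picking a step in {0..w-1};
   there are w^m of them, each equally likely. *)
Fixpoint choices (m w : nat) : list (list nat) :=
  match m with
  | O => [[]]
  | S m' => flat_map (fun c => map (fun x => x :: c) (seq 0 w)) (choices m' w)
  end.

Definition avg {A : Type} (f : A -> R) (L : list A) : R :=
  fold_right Rplus 0 (map f L) / INR (length L).

(* Number of nodes whose chosen step is < r and is chosen by no other node
   (exactly one transmitter => delivered). *)
Definition singles (c : list nat) (r : nat) : nat :=
  length (filter (fun x => andb (Nat.ltb x r) (Nat.eqb (count_occ Nat.eq_dec c x) 1)) c).

(* Probability that m active nodes, facing remaining windows ws, all get
   delivered within the remaining r steps. *)
Fixpoint succ_prob (ws : list nat) (m r : nat) : R :=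
  match m with
  | O => 1
  | S _ =>
    match ws with
    | [] => 0
    | w :: ws' =>
      if Nat.leb r w then
        avg (fun c => if Nat.eqb (singles c r) m then 1 else 0) (choices m w)
      else
        avg (fun c => succ_prob ws' (m - singles c w) (r - w)) (choices m w)
    end
  end.

(* Number of steps in the deadline 4(1+1/delta)k (steps 1..floor of it). *)
Definition deadline (delta : R) (k : nat) : nat :=
  nfloor (4 * (1 + 1 / delta) * INR k).

Definition all_delivered_prob (delta : R) (k : nat) : R :=
  succ_prob (schedule delta (deadline delta k)) k (deadline delta k).

(* Following the paper, we only look at the phase that starts with the first
   window of size 2^J >= k.  In a window of w steps with m contenders, the
   number S of steps chosen by exactly one contender has mean
   mu = m (1-1/w)^(m-1) and variance at most m + m^2/w; we compute these two
   moments exactly by summing over the w^m equally likely choice vectors.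
   As long as m/w stays bounded by rb = (1 - ln delta)/2, Chebyshev's
   inequality shows that the number of contenders shrinks by a factor
   shrink < 1 - delta in each window, except with probability O(1/m), while
   the windows shrink only by (1 - delta); so the ratio m/w stays bounded.
   (This is where delta < 1/e is needed: e^-rb > delta.)  After
   T ~ (1-bet) log_{1/shrink} k windows at most k^bet contenders are left in
   a window of size >= k^gam with gam >= 4 bet, and Markov's inequality with
   the exact mean shows that all of them succeed there, except with
   probability O(k^(2 bet - gam)).  The failure probabilities form a
   geometric series of total O(k^-bet), which is below k^(-bet/2) for large
   k.  Finally the phases before this one and this phase itself last at most
   2^(J+1)/delta <= 4k/delta steps, which is within the deadline. *)

From Stdlib Require Import Reals Lra Lia List Arith ZArith.
Import ListNotations.
Open Scope R_scope.

Definition sumR {A : Type} (f : A -> R) (L : list A) : R :=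
  fold_right Rplus 0 (map f L).

Lemma sumR_cons {A} (f : A -> R) a L : sumR f (a :: L) = f a + sumR f L.
Proof. reflexivity. Qed.

Lemma sumR_app {A} (f : A -> R) L1 L2 :
  sumR f (L1 ++ L2) = sumR f L1 + sumR f L2.
Proof.
  induction L1 as [|a L1 IH]; [unfold sumR; cbn; ring|].
  cbn [app]. rewrite !sumR_cons, IH; ring.
Qed.

Lemma sumR_flat_map {A B} (f : B -> R) (g : A -> list B) L :
  sumR f (flat_map g L) = sumR (fun x => sumR f (g x)) L.
Proof.
  induction L as [|a L IH]; [reflexivity|].
  cbn [flat_map]. rewrite sumR_app, sumR_cons, IH. reflexivity.
Qed.

Lemma sumR_ext_in {A} (f g : A -> R) L :
  (forall x, In x L -> f x = g x) -> sumR f L = sumR g L.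
Proof.
  induction L as [|a L IH]; intros H; [reflexivity|].
  rewrite !sumR_cons, H by (simpl; auto).
  rewrite IH by (intros; apply H; simpl; auto). reflexivity.
Qed.

Lemma sumR_le {A} (f g : A -> R) L :
  (forall x, In x L -> f x <= g x) -> sumR f L <= sumR g L.
Proof.
  induction L as [|a L IH]; intros H; [apply Rle_refl|].
  rewrite !sumR_cons. apply Rplus_le_compat.
  - apply H; simpl; auto.
  - apply IH; intros; apply H; simpl; auto.
Qed.

Lemma sumR_plus {A} (f g : A -> R) L :
  sumR (fun x => f x + g x) L = sumR f L + sumR g L.
Proof. induction L as [|a L IH]; [unfold sumR; cbn; ring|]. rewrite !sumR_cons, IH; ring. Qed.

Lemma sumR_scal {A} (f : A -> R) c L :
  sumR (fun x => c * f x) L = c * sumR f L.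
Proof. induction L as [|a L IH]; [unfold sumR; cbn; ring|]. rewrite !sumR_cons, IH; ring. Qed.

Lemma sumR_const {A} c (L : list A) : sumR (fun _ => c) L = c * INR (length L).
Proof.
  induction L as [|a L IH]; [unfold sumR; cbn; ring|].
  rewrite sumR_cons, IH; cbn [length]; rewrite S_INR; ring.
Qed.

Lemma sumR_delta (x : nat) (v : R) L :
  sumR (fun y => if Nat.eqb y x then v else 0) L = INR (count_occ Nat.eq_dec L x) * v.
Proof.
  induction L as [|a L IH]; [unfold sumR; cbn; ring|].
  rewrite sumR_cons, IH; cbn [count_occ].
  destruct (Nat.eq_dec a x) as [->|Hne].
  - rewrite Nat.eqb_refl, S_INR; ring.
  - apply Nat.eqb_neq in Hne; rewrite Hne; ring.
Qed.

Lemma count_seq x w : (x < w)%nat -> count_occ Nat.eq_dec (seq 0 w) x = 1%nat.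
Proof.
  intros Hx. apply (NoDup_count_occ' Nat.eq_dec); [apply seq_NoDup | apply in_seq; lia].
Qed.

Lemma avg_le {A} (f g : A -> R) L :
  (forall x, In x L -> f x <= g x) -> avg f L <= avg g L.
Proof.
  intros H. unfold avg, Rdiv. apply Rmult_le_compat_r; [|apply sumR_le; auto].
  destruct (length L); [cbn; rewrite Rinv_0; lra|].
  left; apply Rinv_0_lt_compat, lt_0_INR; lia.
Qed.

Lemma avg_const {A} a (L : list A) : (0 < length L)%nat -> avg (fun _ => a) L = a.
Proof.
  intros H. unfold avg. fold (sumR (fun _ : A => a) L). rewrite sumR_const.
  assert (0 < INR (length L)) by (apply lt_0_INR; auto). field; lra.
Qed.

Lemma avg_ge {A} (f : A -> R) a L :
  (0 < length L)%nat -> (forall x, In x L -> a <= f x) -> a <= avg f L.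
Proof. intros H H1. rewrite <- (avg_const a L H). apply avg_le; auto. Qed.

Lemma avg_nonneg {A} (f : A -> R) L : (forall x, In x L -> 0 <= f x) -> 0 <= avg f L.
Proof.
  destruct L as [|a L]; intros H.
  - unfold avg; cbn. lra.
  - apply avg_ge; [cbn; lia | auto].
Qed.

Lemma avg_sub {A} (f : A -> R) a L :
  (0 < length L)%nat -> avg (fun x => a - f x) L = a - avg f L.
Proof.
  intros H. unfold avg. fold (sumR (fun x => a - f x) L) (sumR f L).
  rewrite (sumR_ext_in _ (fun x => a + (-1) * f x)) by (intros; ring).
  rewrite sumR_plus, sumR_scal, sumR_const.
  assert (0 < INR (length L)) by (apply lt_0_INR; auto). field; lra.
Qed.

Lemma exp_le_mono x y : x <= y -> exp x <= exp y.
Proof. intros [H|H]; [left; apply exp_increasing; auto | subst; apply Rle_refl]. Qed.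

Lemma ln_le_mono x y : 0 < x -> x <= y -> ln x <= ln y.
Proof. intros H [H1|H1]; [left; apply ln_increasing; auto | subst; apply Rle_refl]. Qed.

Lemma pow_exp_ln x n : 0 < x -> x ^ n = exp (INR n * ln x).
Proof. intros Hx. rewrite <- Rpower_pow by auto. reflexivity. Qed.

Lemma pow_antimono x t T : 0 <= x <= 1 -> (t <= T)%nat -> x ^ T <= x ^ t.
Proof.
  intros Hx Ht. replace T with (t + (T - t))%nat by lia. rewrite pow_add.
  assert (0 <= x ^ t) by (apply pow_le; lra).
  assert (x ^ (T - t) <= 1) by (rewrite <- (pow1 (T - t)); apply pow_incr; lra). nra.
Qed.

Lemma bernoulli x n : -1 <= x -> 1 + INR n * x <= (1 + x) ^ n.
Proof.
  intros H. induction n as [|n IH]; [cbn; lra|]. rewrite S_INR; cbn [pow].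
  assert (0 <= INR n) by apply pos_INR.
  assert ((1 + x) * (1 + INR n * x) <= (1 + x) * (1 + x) ^ n)
    by (apply Rmult_le_compat_l; lra).
  assert (0 <= INR n * x * x) by (rewrite Rmult_assoc; apply Rmult_le_pos; nra).
  nra.
Qed.

Lemma length_choices m w : length (choices m w) = (w ^ m)%nat.
Proof.
  induction m as [|m IH]; [reflexivity|]. cbn [choices].
  assert (Hfm : forall L : list (list nat),
    length (flat_map (fun c => map (fun x => x :: c) (seq 0 w)) L) = (w * length L)%nat).
  { induction L as [|c L IHL]; cbn; [lia|].
    rewrite length_app, length_map, length_seq, IHL. lia. }
  rewrite Hfm, IH. cbn. lia.
Qed.

Lemma choices_nonempty m w : (1 <= w)%nat -> (0 < length (choices m w))%nat.
Proof. intros H. rewrite length_choices. apply Nat.neq_0_lt_0, Nat.pow_nonzero; lia. Qed.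

Lemma in_choices m w c :
  In c (choices m w) -> length c = m /\ (forall y, In y c -> (y < w)%nat).
Proof.
  revert c; induction m as [|m IH]; intros c H.
  - destruct H as [<-|[]]. split; [reflexivity | intros y []].
  - cbn [choices] in H. apply in_flat_map in H. destruct H as [c' [H1 H2]].
    apply in_map_iff in H2. destruct H2 as [x [<- Hx]]. apply in_seq in Hx.
    destruct (IH c' H1) as [Hl Hy]. split; [cbn; lia|].
    intros y [<-|Hy']; [lia | auto].
Qed.

Lemma sumR_choices_S (f : list nat -> R) m w :
  sumR f (choices (S m) w) =
  sumR (fun c => sumR (fun x => f (x :: c)) (seq 0 w)) (choices m w).
Proof.
  cbn [choices]. rewrite sumR_flat_map. apply sumR_ext_in; intros c _.
  unfold sumR at 1. rewrite map_map. reflexivity.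
Qed.

Definition hits (c : list nat) (y : nat) : nat := count_occ Nat.eq_dec c y.
Definition hit_ind (j : nat) (c : list nat) (y : nat) : R :=
  if Nat.eqb (hits c y) j then 1 else 0.
Definition nsingle (w : nat) (c : list nat) : R := sumR (hit_ind 1 c) (seq 0 w).
Definition nempty (w : nat) (c : list nat) : R := sumR (hit_ind 0 c) (seq 0 w).

Lemma hits_cons x c y : hits (x :: c) y = (if Nat.eqb x y then S (hits c y) else hits c y).
Proof.
  unfold hits; cbn. destruct (Nat.eq_dec x y) as [->|Hne].
  - rewrite Nat.eqb_refl; reflexivity.
  - apply Nat.eqb_neq in Hne; rewrite Hne; reflexivity.
Qed.

Lemma length_filter_by_value w (p : nat -> bool) (l : list nat) :
  (forall y, In y l -> (y < w)%nat) ->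
  INR (length (filter p l)) = sumR (fun y => if p y then INR (hits l y) else 0) (seq 0 w).
Proof.
  induction l as [|a l IH]; intros Hl.
  - rewrite (sumR_ext_in _ (fun _ => 0)) by (intros y _; destruct (p y); reflexivity).
    rewrite sumR_const; cbn; ring.
  - rewrite (sumR_ext_in _ (fun y => (if p y then INR (hits l y) else 0) +
                                    (if Nat.eqb y a then (if p a then 1 else 0) else 0))).
    + rewrite sumR_plus, sumR_delta, <- IH by (intros; apply Hl; simpl; auto).
      rewrite count_seq by (apply Hl; simpl; auto). simpl.
      destruct (p a); simpl length; rewrite ?S_INR; ring.
    + intros y _. rewrite hits_cons. destruct (Nat.eqb a y) eqn:E.
      * apply Nat.eqb_eq in E; subst. rewrite Nat.eqb_refl.
        destruct (p y); [rewrite S_INR|]; ring.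
      * rewrite Nat.eqb_sym, E. ring.
Qed.

Lemma singles_nsingle c w :
  (forall y, In y c -> (y < w)%nat) -> INR (singles c w) = nsingle w c.
Proof.
  intros H. unfold singles. rewrite (length_filter_by_value w) by auto.
  apply sumR_ext_in. intros y Hy. apply in_seq in Hy.
  replace (Nat.ltb y w) with true by (symmetry; apply Nat.ltb_lt; lia). cbn.
  unfold hit_ind. fold (hits c y).
  destruct (Nat.eqb (hits c y) 1) eqn:E; [apply Nat.eqb_eq in E; rewrite E|]; cbn; ring.
Qed.

Lemma hit_ind_cases c x :
  (hit_ind 0 c x = 1 /\ hit_ind 1 c x = 0) \/ (hit_ind 0 c x = 0 /\ hit_ind 1 c x = 1) \/
  (hit_ind 0 c x = 0 /\ hit_ind 1 c x = 0).
Proof. unfold hit_ind. destruct (hits c x) as [|[|n]]; cbn; auto. Qed.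

(* Adding a contender at step x only changes the indicators at x. *)
Lemma hit_ind_update j c x w : (x < w)%nat ->
  sumR (hit_ind j (x :: c)) (seq 0 w) =
  sumR (hit_ind j c) (seq 0 w) + (hit_ind j (x :: c) x - hit_ind j c x).
Proof.
  intros Hx.
  rewrite (sumR_ext_in (hit_ind j (x :: c))
    (fun y => hit_ind j c y + (if Nat.eqb y x then hit_ind j (x :: c) x - hit_ind j c x else 0))).
  - rewrite sumR_plus, sumR_delta, count_seq by auto. cbn; ring.
  - intros y _. destruct (Nat.eqb y x) eqn:E.
    + apply Nat.eqb_eq in E; subst; ring.
    + unfold hit_ind at 1. rewrite hits_cons, (Nat.eqb_sym x y), E. unfold hit_ind; ring.
Qed.

Lemma nsingle_cons w c x : (x < w)%nat ->
  nsingle w (x :: c) = nsingle w c + hit_ind 0 c x - hit_ind 1 c x.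
Proof.
  intros H. unfold nsingle. rewrite hit_ind_update by auto.
  unfold hit_ind. rewrite hits_cons, Nat.eqb_refl. destruct (hits c x) as [|[|n]]; cbn; ring.
Qed.

Lemma nempty_cons w c x : (x < w)%nat -> nempty w (x :: c) = nempty w c - hit_ind 0 c x.
Proof.
  intros H. unfold nempty. rewrite hit_ind_update by auto.
  unfold hit_ind. rewrite hits_cons, Nat.eqb_refl. destruct (hits c x) as [|[|n]]; cbn; ring.
Qed.

Lemma sum_new_contender w c (f : list nat -> R) a b e :
  (forall x, (x < w)%nat -> f (x :: c) = a + b * hit_ind 0 c x + e * hit_ind 1 c x) ->
  sumR (fun x => f (x :: c)) (seq 0 w) = a * INR w + b * nempty w c + e * nsingle w c.
Proof.
  intros H. rewrite (sumR_ext_in _ (fun x => a + b * hit_ind 0 c x + e * hit_ind 1 c x))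
    by (intros x Hx; apply in_seq in Hx; apply H; lia).
  rewrite !sumR_plus, !sumR_scal, sumR_const, length_seq. unfold nempty, nsingle; ring.
Qed.

Ltac hit_cases c x :=
  destruct (hit_ind_cases c x) as [[-> ->]|[[-> ->]|[-> ->]]]; ring.

(** * Exact first and second moments of the occupancy statistics *)

Section Moments.
Variable w : nat.
Let W := INR w.

Definition total (g : list nat -> R) (m : nat) : R := sumR g (choices m w).

Lemma step_empty c :
  sumR (fun x => nempty w (x :: c)) (seq 0 w) = (W - 1) * nempty w c.
Proof.
  rewrite (sum_new_contender w c (nempty w) (nempty w c) (-1) 0); [unfold W; ring|].
  intros x Hx. rewrite nempty_cons by auto. ring.
Qed.

Lemma step_empty2 c :
  sumR (fun x => nempty w (x :: c) * nempty w (x :: c)) (seq 0 w) =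
  (W - 2) * (nempty w c * nempty w c) + 1 * nempty w c.
Proof.
  rewrite (sum_new_contender w c (fun l => nempty w l * nempty w l)
    (nempty w c * nempty w c) (1 - 2 * nempty w c) 0); [unfold W; ring|].
  intros x Hx. rewrite nempty_cons by auto. hit_cases c x.
Qed.

Lemma step_single c :
  sumR (fun x => nsingle w (x :: c)) (seq 0 w) = (W - 1) * nsingle w c + 1 * nempty w c.
Proof.
  rewrite (sum_new_contender w c (nsingle w) (nsingle w c) 1 (-1)); [unfold W; ring|].
  intros x Hx. rewrite nsingle_cons by auto. ring.
Qed.

Lemma step_single_empty c :
  sumR (fun x => nsingle w (x :: c) * nempty w (x :: c)) (seq 0 w) =
  (W - 2) * (nsingle w c * nempty w c) + 1 * (nempty w c * nempty w c)
  + (-1) * nempty w c.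
Proof.
  rewrite (sum_new_contender w c (fun l => nsingle w l * nempty w l)
    (nsingle w c * nempty w c) (nempty w c - nsingle w c - 1) (- nempty w c));
    [unfold W; ring|].
  intros x Hx. rewrite nsingle_cons, nempty_cons by auto. hit_cases c x.
Qed.

Lemma step_single2 c :
  sumR (fun x => nsingle w (x :: c) * nsingle w (x :: c)) (seq 0 w) =
  (W - 2) * (nsingle w c * nsingle w c) + 2 * (nsingle w c * nempty w c)
  + 1 * nempty w c + 1 * nsingle w c.
Proof.
  rewrite (sum_new_contender w c (fun l => nsingle w l * nsingle w l)
    (nsingle w c * nsingle w c) (1 + 2 * nsingle w c) (1 - 2 * nsingle w c));
    [unfold W; ring|].
  intros x Hx. rewrite nsingle_cons by auto. hit_cases c x.
Qed.

Definition total_single (m : nat) : R :=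
  match m with O => 0 | S n => INR (S n) * W * (W - 1) ^ n end.
Definition total_single_empty (m : nat) : R :=
  match m with O => 0 | S n => INR (S n) * W * (W - 1) * (W - 2) ^ n end.
Definition total_single2 (m : nat) : R :=
  match m with
  | O => 0
  | S O => W
  | S (S n) => INR (S (S n)) * W * (W - 1) ^ (S n)
               + (W - 1) * INR (S (S n)) * INR (S n) * W * (W - 2) ^ n
  end.

Lemma total_S g m : total g (S m) = total (fun c => sumR (fun x => g (x :: c)) (seq 0 w)) m.
Proof. apply sumR_choices_S. Qed.

Lemma total_ext f g m : (forall c, f c = g c) -> total f m = total g m.
Proof. intros H. apply sumR_ext_in; auto. Qed.

Lemma total_plus f g m : total (fun c => f c + g c) m = total f m + total g m.
Proof. apply sumR_plus. Qed.

Lemma total_scal f a m : total (fun c => a * f c) m = a * total f m.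
Proof. apply sumR_scal. Qed.

(* Exact totals, by induction on m; the totals of nempty and nempty^2 are
   needed as auxiliary invariants of the induction. *)
Lemma moments m :
  total (nempty w) m = W * (W - 1) ^ m /\
  total (fun c => nempty w c * nempty w c) m = W * (W - 1) * (W - 2) ^ m + W * (W - 1) ^ m /\
  total (nsingle w) m = total_single m /\
  total (fun c => nsingle w c * nempty w c) m = total_single_empty m /\
  total (fun c => nsingle w c * nsingle w c) m = total_single2 m.
Proof.
  induction m as [|m [H1 [H2 [H3 [H4 H5]]]]].
  - assert (Hz : nempty w [] = W).
    { unfold nempty. rewrite (sumR_ext_in _ (fun _ => 1)) by reflexivity.
      rewrite sumR_const, length_seq; unfold W; ring. }
    assert (Hs : nsingle w [] = 0).
    { unfold nsingle. rewrite (sumR_ext_in _ (fun _ => 0)) by reflexivity.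
      rewrite sumR_const; ring. }
    unfold total; cbn. unfold sumR; cbn. rewrite Hz, Hs. repeat split; ring.
  - rewrite !total_S, (total_ext _ _ _ step_empty), (total_ext _ _ _ step_empty2),
      (total_ext _ _ _ step_single), (total_ext _ _ _ step_single_empty),
      (total_ext _ _ _ step_single2), !total_plus, !total_scal, H1, H2, H3, H4, H5.
    repeat split.
    + cbn; ring.
    + cbn; ring.
    + destruct m; cbn; rewrite ?S_INR; cbn; ring.
    + destruct m; cbn; rewrite ?S_INR; cbn; ring.
    + destruct m as [|[|m]]; cbn; rewrite ?S_INR; cbn; ring.
Qed.
End Moments.

Lemma avg_choices g m w : avg g (choices m w) = total w g m / INR w ^ m.
Proof. unfold avg, total. rewrite length_choices, pow_INR. reflexivity. Qed.

Definition mean_single (w m : nat) : R := total_single w m / INR w ^ m.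

Lemma mean_single_0 w : mean_single w 0 = 0.
Proof. unfold mean_single; cbn. lra. Qed.

Lemma mean_single_S w n : (1 <= w)%nat ->
  mean_single w (S n) = INR (S n) * ((INR w - 1) / INR w) ^ n.
Proof.
  intros Hw. unfold mean_single, total_single. assert (0 < INR w) by (apply lt_0_INR; lia).
  unfold Rdiv. rewrite Rpow_mult_distr, pow_inv. cbn [pow].
  field. split; [apply pow_nonzero|]; lra.
Qed.

Lemma total_single_mean w m : (1 <= w)%nat -> total_single w m = mean_single w m * INR w ^ m.
Proof.
  intros Hw. unfold mean_single. assert (0 < INR w) by (apply lt_0_INR; lia).
  field. apply pow_nonzero; lra.
Qed.

(* The algebraic core of the variance bound: with M contenders,
   Q = 1 - 1/w, X = Q^(M-2) and Y = (1 - 2/w)^(M-2) <= X^2. *)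
Lemma variance_algebra M Q X Y :
  1 <= M - 1 -> 0 <= Q <= 1 -> 0 <= X <= 1 -> 0 <= Y <= X ^ 2 ->
  M * Q * X + Q * M * (M - 1) * Y - (M * Q * X) ^ 2 <= M + M ^ 2 * (1 - Q).
Proof.
  intros HM HQ HX HY.
  assert (HQX : 0 <= Q * X <= 1) by (split; [apply Rmult_le_pos|]; nra).
  set (K := M * Q * X ^ 2).
  assert (HQX2 : 0 <= Q * X ^ 2 <= 1)
    by (replace (Q * X ^ 2) with (Q * X * X) by ring; split; [apply Rmult_le_pos|]; nra).
  assert (HK : 0 <= K <= M)
    by (unfold K; rewrite Rmult_assoc; split; [apply Rmult_le_pos|]; nra).
  assert (H1 : Q * M * (M - 1) * Y <= Q * M * (M - 1) * X ^ 2)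
    by (apply Rmult_le_compat_l; [apply Rmult_le_pos; [apply Rmult_le_pos|]|]; lra).
  assert (H2 : Q * M * (M - 1) * X ^ 2 - (M * Q * X) ^ 2 = K * (M * (1 - Q) - 1))
    by (unfold K; ring).
  assert (H3 : M * Q * X <= M) by nra.
  assert (H4 : K * (M * (1 - Q)) <= M * (M * (1 - Q))) by (apply Rmult_le_compat_r; nra).
  nra.
Qed.

Lemma variance_single w m : (2 <= w)%nat ->
  total_single2 w m / INR w ^ m - (mean_single w m) ^ 2 <= INR m + INR m ^ 2 / INR w.
Proof.
  intros Hw. assert (HW : 2 <= INR w) by (apply (le_INR 2); lia).
  assert (0 <= INR m) by apply pos_INR.
  assert (0 <= INR m ^ 2 / INR w) by (apply Rmult_le_pos; [nra | left; apply Rinv_0_lt_compat; lra]).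
  destruct m as [|[|n]].
  - rewrite mean_single_0. cbn. lra.
  - rewrite mean_single_S by lia. cbn in *.
    replace (INR w / (INR w * 1)) with 1 by (field; lra). lra.
  - set (M := INR (S (S n))).
    set (Q := (INR w - 1) / INR w). set (P := (INR w - 2) / INR w).
    assert (HQ : Q = 1 - / INR w) by (unfold Q; field; lra).
    assert (HP : P = 1 - 2 / INR w) by (unfold P; field; lra).
    assert (0 < / INR w <= / 2)
      by (split; [apply Rinv_0_lt_compat | apply Rinv_le_contravar]; lra).
    assert (HPQ : 0 <= P <= Q * Q) by (rewrite HP, HQ; unfold Rdiv; nra).
    assert (HX : 0 <= Q ^ n <= 1)
      by (split; [apply pow_le | rewrite <- (pow1 n); apply pow_incr]; lra).
    assert (HY : 0 <= P ^ n <= (Q ^ n) ^ 2).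
    { split; [apply pow_le; lra|].
      rewrite <- pow_mult, Nat.mul_comm, pow_mult. apply pow_incr; nra. }
    assert (HM : INR (S n) = M - 1) by (unfold M; rewrite (S_INR (S n)); ring).
    assert (HM1 : 1 <= M - 1) by (rewrite <- HM, S_INR; pose proof (pos_INR n); lra).
    assert (E : total_single2 w (S (S n)) / INR w ^ S (S n) =
                M * Q * Q ^ n + Q * M * (M - 1) * P ^ n).
    { unfold total_single2. fold M. rewrite HM.
      replace (INR w - 1) with (Q * INR w) by (unfold Q; field; lra).
      replace (INR w - 2) with (P * INR w) by (unfold P; field; lra).
      rewrite !Rpow_mult_distr. cbn [pow]. field. split; [apply pow_nonzero|]; lra. }
    rewrite E, mean_single_S by lia. fold Q M.
    replace (M * Q ^ S n) with (M * Q * Q ^ n) by (cbn [pow]; ring).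
    replace (M ^ 2 / INR w) with (M ^ 2 * (1 - Q)) by (rewrite HQ; field; lra).
    apply (variance_algebra M Q (Q ^ n) (P ^ n)); lra.
Qed.

(** * Tail bounds for one window *)

Definition overflow_prob (m w : nat) (T : R) : R :=
  avg (fun c => if Rle_dec (INR (m - singles c w)) T then 0 else 1) (choices m w).

Lemma overflow_prob_nonneg m w T : 0 <= overflow_prob m w T.
Proof. apply avg_nonneg. intros; destruct (Rle_dec _ _); lra. Qed.

Lemma remaining_count m w c :
  In c (choices m w) -> INR (m - singles c w) = INR m - nsingle w c.
Proof.
  intros H. destruct (in_choices _ _ _ H) as [Hl Hy].
  rewrite minus_INR, singles_nsingle by (auto; rewrite <- Hl; apply filter_length_le).
  reflexivity.
Qed.

(* Chebyshev: more than T contenders remain only if the number of singletons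
   falls dev below its mean. *)
Lemma window_chebyshev w m T dev : (2 <= w)%nat -> 0 < dev ->
  INR m - mean_single w m + dev <= T ->
  overflow_prob m w T <= (INR m + INR m ^ 2 / INR w) / dev ^ 2.
Proof.
  intros Hw Hd HT. assert (HW : 2 <= INR w) by (apply (le_INR 2); lia).
  assert (HN : 0 < INR w ^ m) by (apply pow_lt; lra).
  assert (Hd2 : 0 < dev ^ 2) by (apply pow_lt; lra).
  set (u := mean_single w m) in *.
  apply Rle_trans with (avg (fun c => (nsingle w c - u) ^ 2 / dev ^ 2) (choices m w)).
  - apply avg_le. intros c Hc. rewrite remaining_count by auto.
    destruct (Rle_dec (INR m - nsingle w c) T).
    + apply Rmult_le_pos; [apply pow2_ge_0 | left; apply Rinv_0_lt_compat; auto].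
    + apply (Rmult_le_reg_r (dev ^ 2)); auto.
      unfold Rdiv; rewrite Rmult_assoc, Rinv_l, Rmult_1_l, Rmult_1_r by lra.
      replace ((nsingle w c - u) ^ 2) with ((u - nsingle w c) ^ 2) by ring.
      apply pow_incr; lra.
  - rewrite avg_choices. unfold total.
    rewrite (sumR_ext_in _ (fun c => (/ dev ^ 2) * (nsingle w c * nsingle w c)
               + (- 2 * u / dev ^ 2) * nsingle w c + u ^ 2 / dev ^ 2)) by (intros; field; lra).
    rewrite !sumR_plus, !sumR_scal, sumR_const, length_choices, pow_INR.
    fold (total w (fun c => nsingle w c * nsingle w c) m) (total w (nsingle w) m).
    destruct (moments w m) as [_ [_ [H3 [_ H5]]]]. rewrite H3, H5.
    rewrite total_single_mean by lia. fold u.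
    pose proof (variance_single w m Hw) as Hvar. fold u in Hvar.
    replace ((/ dev ^ 2 * total_single2 w m + - 2 * u / dev ^ 2 * (u * INR w ^ m)
              + u ^ 2 / dev ^ 2 * INR w ^ m) / INR w ^ m)
      with ((total_single2 w m / INR w ^ m - u ^ 2) / dev ^ 2) by (field; lra).
    unfold Rdiv at 1 3. apply Rmult_le_compat_r; [left; apply Rinv_0_lt_compat|]; lra.
Qed.

(* Markov: the probability that someone remains is at most the expected
   number of remaining contenders. *)
Lemma window_markov w m : (2 <= w)%nat -> overflow_prob m w 0 <= INR m - mean_single w m.
Proof.
  intros Hw. assert (HW : 2 <= INR w) by (apply (le_INR 2); lia).
  assert (HN : 0 < INR w ^ m) by (apply pow_lt; lra).
  apply Rle_trans with (avg (fun c => INR m - nsingle w c) (choices m w)).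
  - apply avg_le. intros c Hc. rewrite <- remaining_count by auto.
    destruct (Rle_dec (INR (m - singles c w)) 0) as [_|Hpos]; [apply pos_INR|].
    destruct (m - singles c w)%nat as [|r]; [cbn in Hpos; lra|].
    rewrite S_INR; pose proof (pos_INR r); lra.
  - rewrite avg_sub by (apply choices_nonempty; lia).
    rewrite avg_choices. destruct (moments w m) as [_ [_ [H3 _]]]. rewrite H3.
    rewrite total_single_mean by lia. right; field; lra.
Qed.

Lemma mean_deficit_exp w m rb : (2 <= w)%nat -> INR m <= rb * (INR w - 1) ->
  INR m - mean_single w m <= INR m * (1 - exp (- rb)).
Proof.
  intros Hw Hm. assert (HW : 2 <= INR w) by (apply (le_INR 2); lia).
  destruct m as [|n]; [rewrite mean_single_0; cbn; lra|].
  rewrite mean_single_S by lia. set (Q := (INR w - 1) / INR w).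
  assert (HQ : exp (- / (INR w - 1)) <= Q).
  { rewrite exp_Ropp. pose proof (exp_ineq1_le (/ (INR w - 1))).
    assert (0 < / (INR w - 1)) by (apply Rinv_0_lt_compat; lra).
    apply (Rmult_le_reg_l (exp (/ (INR w - 1)))); [apply exp_pos|].
    rewrite Rinv_r by (apply Rgt_not_eq, exp_pos).
    replace (exp (/ (INR w - 1)) * Q) with (exp (/ (INR w - 1)) * (INR w - 1) / INR w)
      by (unfold Q; field; lra).
    apply (Rmult_le_reg_r (INR w)); [lra|].
    unfold Rdiv; rewrite Rmult_assoc, Rinv_l, Rmult_1_r, Rmult_1_l by lra.
    apply Rle_trans with ((1 + / (INR w - 1)) * (INR w - 1)).
    - right; field; lra.
    - apply Rmult_le_compat_r; lra. }
  assert (Hn : exp (- rb) <= Q ^ n).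
  { apply Rle_trans with (exp (- / (INR w - 1)) ^ n);
      [|apply pow_incr; split; [left; apply exp_pos | auto]].
    rewrite <- Rpower_pow by apply exp_pos. unfold Rpower. rewrite ln_exp.
    apply exp_le_mono. rewrite S_INR in Hm.
    apply (Rmult_le_reg_r (INR w - 1)); [lra|].
    replace (INR n * - / (INR w - 1) * (INR w - 1)) with (- INR n) by (field; lra). lra. }
  assert (0 <= INR (S n)) by apply pos_INR. nra.
Qed.

Lemma mean_deficit_quadratic w m : (2 <= w)%nat -> INR m - mean_single w m <= INR m ^ 2 / INR w.
Proof.
  intros Hw. assert (HW : 2 <= INR w) by (apply (le_INR 2); lia).
  destruct m as [|n]; [rewrite mean_single_0; cbn; unfold Rdiv; lra|].
  rewrite mean_single_S by lia.
  assert (HB : 1 + INR n * (- / INR w) <= ((INR w - 1) / INR w) ^ n).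
  { replace ((INR w - 1) / INR w) with (1 + - / INR w) by (field; lra). apply bernoulli.
    assert (/ INR w <= 1) by (rewrite <- Rinv_1; apply Rinv_le_contravar; lra). lra. }
  rewrite S_INR. pose proof (pos_INR n).
  assert (0 < / INR w) by (apply Rinv_0_lt_compat; lra).
  apply Rle_trans with ((INR n + 1) * (INR n * / INR w)); [nra|].
  unfold Rdiv. nra.
Qed.

Lemma succ_prob_nonneg ws m r : 0 <= succ_prob ws m r.
Proof.
  revert m r; induction ws as [|w ws IH]; intros m r; destruct m; cbn; try lra.
  destruct (Nat.leb r w); apply avg_nonneg; intros; [destruct (Nat.eqb _ _); lra | apply IH].
Qed.

Lemma succ_prob_0 ws r : succ_prob ws 0 r = 1.
Proof. destruct ws; reflexivity. Qed.

Lemma window_step_lb w ws m r M' P p : (1 <= w)%nat -> (w < r)%nat -> 0 <= P ->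
  (forall m', INR m' <= M' -> 1 - P <= succ_prob ws m' (r - w)) ->
  overflow_prob m w M' <= p -> 1 - P - p <= succ_prob (w :: ws) m r.
Proof.
  intros Hw Hr HP IH Hp. pose proof (overflow_prob_nonneg m w M').
  destruct m as [|m]; [cbn; lra|]. cbn [succ_prob].
  replace (Nat.leb r w) with false by (symmetry; apply Nat.leb_gt; lia).
  unfold overflow_prob in Hp.
  apply Rle_trans with (avg (fun c => 1 - P -
    (if Rle_dec (INR (S m - singles c w)) M' then 0 else 1)) (choices (S m) w)).
  - rewrite avg_sub by (apply choices_nonempty; auto). lra.
  - apply avg_le. intros c Hc. destruct (Rle_dec _ _) as [H1|H1].
    + rewrite Rminus_0_r. apply IH; auto.
    + pose proof (succ_prob_nonneg ws (S m - singles c w) (r - w)). lra.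
Qed.

Definition lsum (l : list nat) : nat := fold_right Nat.add 0%nat l.

(* Windows before the analysed phase can only help: ignoring them costs
   only their total length. *)
Lemma prefix_lb (pre ws : list nat) (K : nat) (B L : R) :
  1 <= B -> L <= 1 -> Forall (fun x => (1 <= x)%nat) pre ->
  (forall m r, (m <= K)%nat -> B <= INR r -> L <= succ_prob ws m r) ->
  forall m r, (m <= K)%nat -> INR (lsum pre) + B <= INR r -> L <= succ_prob (pre ++ ws) m r.
Proof.
  intros HB HL Hpre H. induction pre as [|w pre IH]; intros m r Hm Hr.
  - cbn in *. apply H; auto. lra.
  - inversion Hpre as [|? ? Hw Hpre']; subst. cbn [app].
    destruct m as [|m]; [cbn; lra|].
    cbn [lsum fold_right] in Hr. fold (lsum pre) in Hr. rewrite plus_INR in Hr.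
    pose proof (pos_INR (lsum pre)).
    assert (Hwr : (w < r)%nat) by (apply INR_lt; lra).
    cbn [succ_prob]. replace (Nat.leb r w) with false by (symmetry; apply Nat.leb_gt; lia).
    apply avg_ge; [apply choices_nonempty; auto|]. intros c Hc. apply IH; auto.
    + lia.
    + rewrite minus_INR by lia. lra.
Qed.

(** * One phase of the schedule *)

Lemma nfloor_spec y : 0 <= y -> y - 1 < INR (nfloor y) <= y.
Proof.
  intros Hy. unfold nfloor. destruct (base_Int_part y) as [H1 H2].
  assert (Hz : (0 <= Int_part y)%Z).
  { apply le_IZR. destruct (Z_lt_le_dec (Int_part y) 0) as [l|l]; [|apply IZR_le in l; lra].
    assert (Int_part y <= -1)%Z by lia. apply IZR_le in H. lra. }
  rewrite INR_IZR_INZ, Z2Nat.id by auto. lra.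
Qed.

Lemma phase_windows_S d w f :
  1 <= w -> phase_windows d w (S f) = nfloor w :: phase_windows d (w * (1 - d)) f.
Proof. intros H. cbn. destruct (Rle_dec 1 w); [reflexivity | lra]. Qed.

Lemma window_fits d w r : 0 < d < 1 -> 3 <= w -> w / d + 1 <= INR r ->
  (2 <= nfloor w)%nat /\ (nfloor w < r)%nat /\ w * (1 - d) / d + 1 <= INR (r - nfloor w).
Proof.
  intros Hd Hw Hr. destruct (nfloor_spec w) as [F1 F2]; [lra|].
  assert (Hwd : w <= w / d).
  { apply (Rmult_le_reg_r d); [lra|]. unfold Rdiv. rewrite Rmult_assoc, Rinv_l by lra. nra. }
  assert (Hlt : (nfloor w < r)%nat) by (apply INR_lt; lra).
  repeat split.
  - assert (1 < nfloor w)%nat by (apply INR_lt; cbn; lra). lia.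
  - exact Hlt.
  - rewrite minus_INR by lia.
    replace (w * (1 - d) / d + 1) with (w / d + 1 - w) by (field; lra). lra.
Qed.

Fixpoint fail_sum (pr : nat -> R) (t n : nat) : R :=
  match n with O => pr t | S n' => pr t + fail_sum pr (S t) n' end.

Lemma fail_sum_nonneg pr t n : (forall t, 0 <= pr t) -> 0 <= fail_sum pr t n.
Proof.
  intros Hp. revert t; induction n as [|n IH]; intros t; cbn; [apply Hp|].
  pose proof (Hp t); pose proof (IH (S t)); lra.
Qed.

(* The phase starting with a window of real size W0: its t-th window has
   real size W0 (1-d)^t. *)
Section Phase.
Variables (d W0 : R) (T : nat) (bound pr : nat -> R).
Hypothesis Hd : 0 < d < 1.
Hypothesis Hsize : forall t, (t <= T)%nat -> 3 <= W0 * (1 - d) ^ t.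
Hypothesis Hstep : forall t, (t < T)%nat -> forall m, INR m <= bound t ->
  overflow_prob m (nfloor (W0 * (1 - d) ^ t)) (bound (S t)) <= pr t.
Hypothesis Hlast : forall m, INR m <= bound T ->
  overflow_prob m (nfloor (W0 * (1 - d) ^ T)) 0 <= pr T.
Hypothesis Hpr : forall t, 0 <= pr t.

Lemma phase_lb : forall n t, (t + n = T)%nat -> forall fuel, (n < fuel)%nat ->
  forall w, w = W0 * (1 - d) ^ t -> forall post m r, INR m <= bound t ->
  w / d + 1 <= INR r -> 1 - fail_sum pr t n <= succ_prob (phase_windows d w fuel ++ post) m r.
Proof.
  induction n as [|n IH]; intros t Ht fuel Hf w Hwt post m r Hm Hr;
    (destruct fuel as [|f]; [lia|]);
    (assert (Hw3 : 3 <= w) by (subst; apply Hsize; lia));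
    destruct (window_fits d w r Hd Hw3 Hr) as [Hw2 [Hwr Hrest]];
    rewrite phase_windows_S by lra; cbn [app fail_sum].
  - replace (1 - pr t) with (1 - 0 - pr t) by ring.
    apply window_step_lb with (M' := 0); [lia | auto | lra | |].
    + intros m' Hm'. destruct m' as [|m']; [rewrite succ_prob_0; lra|].
      rewrite S_INR in Hm'. pose proof (pos_INR m'). lra.
    + replace t with T in * by lia. subst w. apply Hlast; auto.
  - pose proof (fail_sum_nonneg pr (S t) n Hpr).
    replace (1 - (pr t + fail_sum pr (S t) n)) with (1 - fail_sum pr (S t) n - pr t) by ring.
    apply window_step_lb with (M' := bound (S t)); [lia | auto | lra | |].
    + intros m' Hm'. apply IH; auto; try lia. subst w. cbn [pow]. ring.
    + subst w. apply Hstep; [lia | auto].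
Qed.
End Phase.

Lemma phase_windows_pos d w f : Forall (fun x => (1 <= x)%nat) (phase_windows d w f).
Proof.
  revert w; induction f as [|f IH]; intros w; cbn; [constructor|].
  destruct (Rle_dec 1 w) as [Hw1|]; [|constructor]. constructor; auto.
  destruct (nfloor_spec w) as [F1 F2]; [lra|].
  assert (0 < nfloor w)%nat by (apply INR_lt; cbn; lra). lia.
Qed.

Lemma phase_length d w f : 0 < d < 1 -> 0 <= w -> INR (lsum (phase_windows d w f)) <= w / d.
Proof.
  intros Hd. revert w; induction f as [|f IH]; intros w Hw; cbn.
  - apply Rmult_le_pos; [lra | left; apply Rinv_0_lt_compat; lra].
  - destruct (Rle_dec 1 w).
    + cbn [lsum fold_right]. fold (lsum (phase_windows d (w * (1 - d)) f)).
      rewrite plus_INR. destruct (nfloor_spec w) as [F1 F2]; [lra|].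
      assert (0 <= w * (1 - d)) by nra. pose proof (IH _ H).
      replace (w / d) with (w + w * (1 - d) / d) by (field; lra). lra.
    + apply Rmult_le_pos; [lra | left; apply Rinv_0_lt_compat; lra].
Qed.

Lemma lsum_app l1 l2 : lsum (l1 ++ l2) = (lsum l1 + lsum l2)%nat.
Proof. induction l1 as [|a l1 IH]; cbn; [reflexivity|]. unfold lsum in *; rewrite IH; lia. Qed.

Lemma phases_length d D n : 0 < d < 1 ->
  INR (lsum (flat_map (fun i => phase_windows d (2 ^ i) D) (seq 1 n))) <= (2 ^ (S n) - 2) / d.
Proof.
  intros Hd. induction n as [|n IH].
  - cbn. replace (2 * 1 - 2) with 0 by ring. unfold Rdiv; rewrite Rmult_0_l; lra.
  - rewrite seq_S, flat_map_app, lsum_app, plus_INR. cbn [flat_map]. rewrite app_nil_r.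
    replace (1 + n)%nat with (S n) by lia.
    pose proof (phase_length d (2 ^ S n) D Hd (pow_le 2 (S n) ltac:(lra))).
    apply Rle_trans with ((2 ^ S n - 2) / d + 2 ^ S n / d); [lra|].
    right. change (2 ^ S (S n)) with (2 * 2 ^ S n). field; lra.
Qed.

Lemma schedule_split d D J : (1 <= J <= D)%nat ->
  schedule d D = flat_map (fun i => phase_windows d (2 ^ i) D) (seq 1 (J - 1)) ++
    (phase_windows d (2 ^ J) D ++ flat_map (fun i => phase_windows d (2 ^ i) D) (seq (S J) (D - J))).
Proof.
  intros H. unfold schedule.
  replace (seq 1 D) with (seq 1 (J - 1) ++ seq J (S (D - J))).
  - rewrite flat_map_app. reflexivity.
  - replace J with (1 + (J - 1))%nat at 2 by lia. rewrite <- seq_app. f_equal. lia.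
Qed.

(* Reduction to the phase J, whose first window 2^J is at least k: if that
   phase succeeds (in the sense of [phase_lb]) and the deadline D exceeds
   4(1+1/d)k - 1, then all k messages are delivered in time. *)
Lemma schedule_lb d k J T D (bound pr : nat -> R) :
  0 < d < 1 -> (1 <= J <= D)%nat -> (T < D)%nat ->
  INR k <= 2 ^ J <= 2 * INR k - 1 -> 4 * (1 + 1 / d) * INR k - 1 < INR D ->
  INR k <= bound 0%nat ->
  (forall t, (t <= T)%nat -> 3 <= 2 ^ J * (1 - d) ^ t) ->
  (forall t, (t < T)%nat -> forall m, INR m <= bound t ->
     overflow_prob m (nfloor (2 ^ J * (1 - d) ^ t)) (bound (S t)) <= pr t) ->
  (forall m, INR m <= bound T -> overflow_prob m (nfloor (2 ^ J * (1 - d) ^ T)) 0 <= pr T) ->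
  (forall t, 0 <= pr t) ->
  1 - fail_sum pr 0 T <= succ_prob (schedule d D) k D.
Proof.
  intros Hd HJ HTD HW0 HD Hk Hsize Hstep Hlast Hpr.
  rewrite (schedule_split d D J HJ).
  assert (HW0d : 0 <= 2 ^ J / d) by (apply Rmult_le_pos; [lra | left; apply Rinv_0_lt_compat; lra]).
  pose proof (fail_sum_nonneg pr 0 T Hpr).
  apply (prefix_lb _ _ k (2 ^ J / d + 1)); [lra | lra | | | lia |].
  - apply Forall_flat_map, Forall_forall. intros; apply phase_windows_pos.
  - intros m r Hm Hr.
    apply (phase_lb d (2 ^ J) T bound pr Hd Hsize Hstep Hlast Hpr T 0 eq_refl D HTD);
      [cbn; ring | | auto].
    apply Rle_trans with (INR k); [apply le_INR; auto | auto].
  - pose proof (phases_length d D (J - 1) Hd) as Hpre.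
    replace (S (J - 1)) with J in Hpre by lia.
    assert (Hinv : 1 < 1 / d).
    { apply (Rmult_lt_reg_r d); [lra|]. unfold Rdiv; rewrite Rmult_assoc, Rinv_l by lra. lra. }
    apply Rle_trans with ((2 * 2 ^ J - 2) * (1 / d) + 1).
    { replace ((2 * 2 ^ J - 2) * (1 / d) + 1) with ((2 ^ J - 2) / d + (2 ^ J / d + 1))
        by (field; lra). lra. }
    assert ((2 * 2 ^ J - 2) * (1 / d) <= (4 * INR k - 4) * (1 / d))
      by (apply Rmult_le_compat_r; lra).
    nra.
Qed.

(** * The constants of the analysis *)

Section Constants.
Variable d : R.
Hypothesis Hd : 0 < d < 1 / exp 1.

(* Largest ratio (contenders / window size) kept along the phase. *)
Definition rb : R := (1 - ln d) / 2.
(* Chebyshev margin: the fraction of contenders left after a window is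
   at most 1 - e^-rb, and we allow an additional deviation [margin]. *)
Definition margin : R := (exp (- rb) - d) / 2.
(* Resulting contraction factor of the number of contenders per window. *)
Definition shrink : R := 1 - (exp (- rb) + d) / 2.
Definition ratio : R := / shrink.
(* Decay rates of windows and of contenders, and the exponents: after
   (1-bet) log_{1/shrink} k windows, k^bet contenders face windows of
   size about k^gam. *)
Definition lw : R := - ln (1 - d).
Definition lc : R := ln ratio.
Definition lam : R := lw / lc.
Definition bet : R := (1 - lam) / 4.
Definition gam : R := 1 - (1 - bet) * lam.
(* Window-size threshold for the Chebyshev step, and the constants of the
   final failure bound. *)
Definition Kbig : R := 2 * rb / (rb - 1) + 3.
Definition C0 : R := (1 + rb) / margin ^ 2.
Definition Cfin : R := C0 * ratio / (ratio - 1) + 2 / (1 - d).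

Lemma d_lt1 : d < 1.
Proof.
  destruct Hd. assert (1 < exp 1)
    by (pose proof (exp_increasing 0 1 Rlt_0_1) as E; rewrite exp_0 in E; exact E).
  assert (1 / exp 1 < 1)
    by (apply (Rmult_lt_reg_r (exp 1)); [lra|]; unfold Rdiv; rewrite Rmult_assoc, Rinv_l by lra; lra).
  lra.
Qed.

Lemma ln_d_lt : ln d < -1.
Proof.
  destruct Hd. replace (-1) with (ln (1 / exp 1)).
  - apply ln_increasing; auto.
  - unfold Rdiv; rewrite Rmult_1_l, ln_Rinv, ln_exp by apply exp_pos. ring.
Qed.

Lemma rb_gt1 : 1 < rb.
Proof. unfold rb. pose proof ln_d_lt. lra. Qed.

(* The hypothesis delta < 1/e is used exactly here: e^-rb > delta. *)
Lemma exp_rb_gt_d : d < exp (- rb).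
Proof.
  destruct Hd. rewrite <- (exp_ln d) at 1 by auto. apply exp_increasing.
  unfold rb. pose proof ln_d_lt. lra.
Qed.

Lemma exp_rb_lt1 : exp (- rb) < 1.
Proof. rewrite <- exp_0. apply exp_increasing. pose proof rb_gt1. lra. Qed.

Lemma margin_pos : 0 < margin.
Proof. unfold margin. pose proof exp_rb_gt_d. lra. Qed.

Lemma shrink_bounds : 0 < shrink < 1 - d.
Proof. unfold shrink. pose proof exp_rb_gt_d; pose proof exp_rb_lt1; pose proof d_lt1; lra. Qed.

Lemma shrink_eq : shrink = (1 - exp (- rb)) + margin.
Proof. unfold shrink, margin; field. Qed.

Lemma ratio_gt1 : 1 < ratio.
Proof.
  unfold ratio. destruct shrink_bounds. pose proof d_lt1.
  apply (Rmult_lt_reg_r shrink); [lra|]. rewrite Rinv_l by lra. lra.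
Qed.

Lemma lw_ge_d : d <= lw.
Proof.
  unfold lw. pose proof d_lt1. destruct Hd.
  assert (ln (1 - d) <= ln (exp (- d))); [|rewrite ln_exp in *; lra].
  apply ln_le_mono; [lra|]. pose proof (exp_ineq1_le (- d)). lra.
Qed.

Lemma lw_lt_lc : lw < lc.
Proof.
  unfold lw, lc, ratio. destruct shrink_bounds. pose proof d_lt1.
  rewrite ln_Rinv by auto. apply Ropp_lt_contravar, ln_increasing; lra.
Qed.

Lemma lam_bounds : 0 < lam < 1.
Proof.
  unfold lam. pose proof lw_ge_d; pose proof lw_lt_lc. destruct Hd. split.
  - apply Rdiv_lt_0_compat; lra.
  - apply (Rmult_lt_reg_r lc); [lra|]. unfold Rdiv; rewrite Rmult_assoc, Rinv_l by lra. lra.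
Qed.

Lemma bet_bounds : 0 < bet < 1 / 4.
Proof. unfold bet; pose proof lam_bounds; lra. Qed.

Lemma gam_ge : 4 * bet <= gam.
Proof. unfold gam, bet. pose proof lam_bounds. nra. Qed.

Lemma Kbig_gt : 3 < Kbig /\ 0 < 2 * rb / (rb - 1).
Proof.
  unfold Kbig. pose proof rb_gt1.
  assert (0 < 2 * rb / (rb - 1)) by (apply Rdiv_lt_0_compat; lra). lra.
Qed.

End Constants.

Section Windows.
Variable d : R.
Hypothesis Hd : 0 < d < 1 / exp 1.

Lemma chebyshev_window Kt wv M m :
  Kbig d <= Kt -> Kt <= wv -> 0 < M <= Kt -> INR m <= M ->
  overflow_prob m (nfloor wv) (shrink d * M) <= C0 d / M.
Proof.
  intros HK HKw HM Hm.
  pose proof (rb_gt1 d Hd) as Hrb. pose proof (margin_pos d Hd) as Hmar.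
  pose proof (exp_rb_lt1 d Hd). destruct (Kbig_gt d Hd) as [HK3 HK2].
  set (r := rb d) in *. set (wn := nfloor wv).
  destruct (nfloor_spec wv) as [N1 N2]; [lra|]. fold wn in N1, N2.
  assert (Hwn : (2 <= wn)%nat) by (assert (1 < wn)%nat by (apply INR_lt; cbn; lra); lia).
  (* Kt >= 2 rb/(rb-1) means Kt <= rb (Kt - 2): the ratio stays below rb. *)
  assert (Hratio : Kt <= r * (Kt - 2)).
  { assert (Hge : 2 * r / (r - 1) <= Kt) by (unfold Kbig in HK; fold r in HK; lra).
    assert (2 * r <= (r - 1) * Kt); [|nra].
    apply (Rmult_le_reg_r (/ (r - 1))); [apply Rinv_0_lt_compat; lra|].
    replace ((r - 1) * Kt * / (r - 1)) with Kt by (field; lra). exact Hge. }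
  assert (HmW : INR m <= r * (INR wn - 1))
    by (assert (r * (Kt - 2) <= r * (INR wn - 1)) by (apply Rmult_le_compat_l; lra); lra).
  assert (HMW : M <= r * INR wn)
    by (assert (r * (Kt - 2) <= r * INR wn) by (apply Rmult_le_compat_l; lra); lra).
  eapply Rle_trans; [apply window_chebyshev with (dev := margin d * M); [auto | nra |] |].
  - pose proof (mean_deficit_exp wn m r Hwn HmW).
    assert (INR m * (1 - exp (- r)) <= M * (1 - exp (- r))) by (apply Rmult_le_compat_r; lra).
    rewrite (shrink_eq d). fold r. lra.
  - assert (HwnR : 0 < INR wn) by lra.
    assert (INR m ^ 2 / INR wn <= M ^ 2 / INR wn).
    { unfold Rdiv. apply Rmult_le_compat_r; [left; apply Rinv_0_lt_compat; lra|].
      pose proof (pos_INR m). apply pow_incr; lra. }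
    assert (M ^ 2 / INR wn <= r * M).
    { apply (Rmult_le_reg_r (INR wn)); auto.
      replace (M ^ 2 / INR wn * INR wn) with (M * M) by (field; lra).
      replace (r * M * INR wn) with (M * (r * INR wn)) by ring.
      apply Rmult_le_compat_l; lra. }
    assert (HtM : 0 < (margin d * M) ^ 2) by (apply pow_lt; nra).
    apply Rle_trans with ((M + r * M) / (margin d * M) ^ 2).
    + unfold Rdiv. apply Rmult_le_compat_r; [left; apply Rinv_0_lt_compat; auto | lra].
    + right. unfold C0. fold r. field. split; lra.
Qed.

End Windows.

Lemma markov_window wv M m : 3 <= wv -> INR m <= M ->
  overflow_prob m (nfloor wv) 0 <= M ^ 2 / (wv - 1).
Proof.
  intros Hw Hm. destruct (nfloor_spec wv) as [N1 N2]; [lra|].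
  assert (Hwn : (2 <= nfloor wv)%nat)
    by (assert (1 < nfloor wv)%nat by (apply INR_lt; cbn; lra); lia).
  eapply Rle_trans; [apply window_markov; auto|].
  eapply Rle_trans; [apply mean_deficit_quadratic; auto|].
  pose proof (pos_INR m).
  assert (INR m ^ 2 <= M ^ 2) by (apply pow_incr; lra).
  unfold Rdiv. apply Rmult_le_compat; [apply pow2_ge_0 | left; apply Rinv_0_lt_compat; lra | auto |].
  apply Rinv_le_contravar; lra.
Qed.

Section Horizon.
Variable d : R.
Hypothesis Hd : 0 < d < 1 / exp 1.

Lemma log_horizon_le k : (2 <= k)%nat -> (1 - bet d) * ln (INR k) / lc d <= INR k / d.
Proof.
  intros Hk2. pose proof (lw_ge_d d Hd). pose proof (lw_lt_lc d Hd).
  pose proof (bet_bounds d Hd). destruct Hd as [Hd0 _].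
  assert (HkR : 2 <= INR k) by (apply (le_INR 2); lia).
  assert (HLk : 0 < ln (INR k)) by (rewrite <- ln_1; apply ln_increasing; lra).
  assert (HLkk : ln (INR k) < INR k)
    by (pose proof (exp_ineq1_le (ln (INR k))); rewrite exp_ln in *; lra).
  unfold Rdiv. apply Rle_trans with (ln (INR k) * / lc d).
  - apply Rmult_le_compat_r; [left; apply Rinv_0_lt_compat; lra | nra].
  - apply Rle_trans with (ln (INR k) * / d).
    + apply Rmult_le_compat_l; [lra|]. apply Rinv_le_contravar; lra.
    + apply Rmult_le_compat_r; [left; apply Rinv_0_lt_compat | ]; lra.
Qed.

(* With T = floor((1-bet) log_{1/shrink} k) + 1 windows: the window sizes
   are still >= (1-d) k^gam, at most k^bet contenders are left, the
   geometric ratio sum is O(k^(1-bet)), and T fits well within k/d steps. *)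
Lemma horizon k : (2 <= k)%nat -> exists T : nat,
  INR T <= INR k / d + 1 /\
  (1 - d) * Rpower (INR k) (gam d) <= INR k * (1 - d) ^ T /\
  INR k * shrink d ^ T <= Rpower (INR k) (bet d) /\
  ratio d ^ T <= ratio d * Rpower (INR k) (1 - bet d).
Proof.
  intros Hk2. pose proof (log_horizon_le k Hk2) as Hyk.
  pose proof (d_lt1 d Hd) as Hd1. pose proof (shrink_bounds d Hd) as Hsh.
  pose proof (ratio_gt1 d Hd) as Hrat. pose proof (lw_ge_d d Hd) as Hlw.
  pose proof (lw_lt_lc d Hd) as Hlc. pose proof (bet_bounds d Hd) as Hbet.
  assert (HkR : 2 <= INR k) by (apply (le_INR 2); lia).
  unfold Rpower. set (Lk := ln (INR k)) in *.
  assert (HLk : 0 < Lk) by (unfold Lk; rewrite <- ln_1; apply ln_increasing; lra).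
  assert (HkL : INR k = exp Lk) by (unfold Lk; rewrite exp_ln; lra).
  set (b := bet d) in *. set (Lc := lc d) in *. set (Lw := lw d) in *.
  set (y := (1 - b) * Lk / Lc) in *.
  assert (Hy0 : 0 <= y)
    by (unfold y; apply Rmult_le_pos; [nra | left; apply Rinv_0_lt_compat; lra]).
  assert (Hylc : y * Lc = (1 - b) * Lk) by (unfold y; field; lra).
  assert (Hylw : y * Lw = (1 - b) * lam d * Lk) by (unfold y, lam; fold Lw Lc; field; lra).
  exists (S (nfloor y)).
  assert (HT : y < INR (S (nfloor y)) <= y + 1)
    by (rewrite S_INR; destruct (nfloor_spec y Hy0); lra).
  set (T := S (nfloor y)) in *.
  assert (Ew : 1 - d = exp (- Lw)) by (unfold Lw, lw; rewrite Ropp_involutive, exp_ln; lra).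
  assert (Es : shrink d = exp (- Lc))
    by (unfold Lc, lc, ratio; rewrite ln_Rinv, Ropp_involutive, exp_ln; lra).
  assert (Er : ratio d = exp Lc) by (unfold Lc, lc; rewrite exp_ln; lra).
  repeat split.
  - lra.
  - rewrite (pow_exp_ln (1 - d)), Ew, ln_exp, HkL by lra. rewrite <- !exp_plus.
    apply exp_le_mono. unfold gam. fold b. nra.
  - rewrite (pow_exp_ln (shrink d)), Es, ln_exp, HkL by lra. rewrite <- !exp_plus.
    apply exp_le_mono. nra.
  - rewrite (pow_exp_ln (ratio d)), Er, ln_exp by lra. rewrite <- !exp_plus.
    apply exp_le_mono. nra.
Qed.
End Horizon.

Lemma fail_sum_geometric (pr : nat -> R) (T : nat) (a x : R) : 1 < x ->
  (forall t, (t < T)%nat -> pr t = a * x ^ t) ->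
  forall n t, (t + n = T)%nat -> fail_sum pr t n = a * (x ^ T - x ^ t) / (x - 1) + pr T.
Proof.
  intros Hx Hpr. induction n as [|n IH]; intros t Ht; cbn [fail_sum].
  - replace t with T by lia. field. lra.
  - rewrite IH, Hpr by lia. cbn [pow]. field. lra.
Qed.

Lemma first_phase_index k : (2 <= k)%nat ->
  exists J : nat, (1 <= J <= k)%nat /\ INR k <= 2 ^ J <= 2 * INR k - 1.
Proof.
  intros Hk. exists (Nat.log2_up k).
  destruct (Nat.log2_up_spec k) as [HJ1 HJ2]; [lia|].
  pose proof (Nat.log2_up_pos k ltac:(lia)) as HJ0.
  pose proof (Nat.log2_up_lt_lin k ltac:(lia)) as HJk.
  assert (HJ3 : (2 ^ Nat.log2_up k <= 2 * k - 1)%nat).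
  { replace (Nat.log2_up k) with (S (Nat.pred (Nat.log2_up k))) by lia.
    rewrite Nat.pow_succ_r'. revert HJ1. generalize (2 ^ Nat.pred (Nat.log2_up k))%nat. lia. }
  split; [lia|].
  replace (2 ^ Nat.log2_up k) with (INR (2 ^ Nat.log2_up k)) by (rewrite pow_INR; reflexivity).
  split; [apply le_INR; auto|].
  apply le_INR in HJ3. rewrite minus_INR, mult_INR in HJ3 by lia. cbn in HJ3. lra.
Qed.

Lemma deadline_spec d k : 0 < d -> 4 * (1 + 1 / d) * INR k - 1 < INR (deadline d k).
Proof.
  intros Hd. unfold deadline. pose proof (pos_INR k).
  assert (0 < 1 / d) by (apply Rdiv_lt_0_compat; lra).
  destruct (nfloor_spec (4 * (1 + 1 / d) * INR k)) as [N1 _]; [nra | lra].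
Qed.

Section Assembly.
Variable d : R.
Hypothesis Hd : 0 < d < 1 / exp 1.

(* Expected number of contenders before window t of the phase, and the
   failure bounds of each window: Chebyshev for t < T, Markov for t = T. *)
Definition contenders (k t : nat) : R := INR k * shrink d ^ t.
Definition fail_bound (k T t : nat) : R :=
  if Nat.ltb t T then C0 d / contenders k t
  else contenders k T ^ 2 / (INR k * (1 - d) ^ T - 1).

(* The Chebyshev windows t < T contribute a geometric sum dominated by its
   last term C0 ratio^T / k = O(k^-bet). *)
Lemma chebyshev_terms_bound k T : (2 <= k)%nat ->
  ratio d ^ T <= ratio d * Rpower (INR k) (1 - bet d) ->
  C0 d / INR k * (ratio d ^ T - ratio d ^ 0) / (ratio d - 1)
  <= C0 d * ratio d / (ratio d - 1) * Rpower (INR k) (- bet d).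
Proof.
  intros Hk2 F3. pose proof (ratio_gt1 d Hd) as Hx.
  pose proof (margin_pos d Hd). pose proof (rb_gt1 d Hd).
  assert (HC0 : 0 < C0 d) by (apply Rdiv_lt_0_compat; [lra | apply pow_lt; lra]).
  assert (HkR : 2 <= INR k) by (apply (le_INR 2); lia).
  unfold Rpower in *. set (Lk := ln (INR k)) in *.
  assert (HkL : INR k = exp Lk) by (unfold Lk; rewrite exp_ln; lra).
  set (x := ratio d) in *. set (b := bet d) in *. cbn [pow].
  apply Rle_trans with (C0 d / INR k * (x * exp ((1 - b) * Lk)) / (x - 1)).
  - unfold Rdiv. apply Rmult_le_compat_r; [left; apply Rinv_0_lt_compat; lra|].
    apply Rmult_le_compat_l; [apply Rmult_le_pos; [lra | left; apply Rinv_0_lt_compat; lra] | lra].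
  - right. rewrite HkL. replace (- b * Lk) with ((1 - b) * Lk + - Lk) by ring.
    rewrite exp_plus, exp_Ropp. field. repeat split; try lra; apply Rgt_not_eq, exp_pos.
Qed.

(* The Markov window T: (k^bet)^2 over a window size k (1-d)^T - 1 at least
   (1-d) k^gam / 2 gives O(k^(2 bet - gam)) = O(k^-bet), since gam >= 3 bet. *)
Lemma markov_term_bound k T : (2 <= k)%nat ->
  Kbig d <= (1 - d) * Rpower (INR k) (gam d) ->
  (1 - d) * Rpower (INR k) (gam d) <= INR k * (1 - d) ^ T ->
  contenders k T <= Rpower (INR k) (bet d) ->
  contenders k T ^ 2 / (INR k * (1 - d) ^ T - 1) <= 2 / (1 - d) * Rpower (INR k) (- bet d).
Proof.
  intros Hk2 HK F1 F2.
  pose proof (d_lt1 d Hd) as Hd1. pose proof (shrink_bounds d Hd) as Hsh.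
  pose proof (bet_bounds d Hd) as Hb. pose proof (gam_ge d Hd) as Hg.
  destruct (Kbig_gt d Hd) as [HK3 _].
  assert (HkR : 2 <= INR k) by (apply (le_INR 2); lia).
  unfold Rpower in *. set (Lk := ln (INR k)) in *.
  assert (HLk : 0 < Lk) by (unfold Lk; rewrite <- ln_1; apply ln_increasing; lra).
  set (b := bet d) in *. set (g := gam d) in *.
  assert (0 < contenders k T) by (apply Rmult_lt_0_compat; [lra | apply pow_lt; lra]).
  assert (0 < (1 - d) * exp (g * Lk)) by (apply Rmult_lt_0_compat; [lra | apply exp_pos]).
  apply Rle_trans with (exp (b * Lk) ^ 2 / ((1 - d) * exp (g * Lk) / 2)).
  - unfold Rdiv. apply Rmult_le_compat; [apply pow2_ge_0 | left; apply Rinv_0_lt_compat; lra | |].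
    + apply pow_incr; lra.
    + apply Rinv_le_contravar; lra.
  - replace (exp (b * Lk) ^ 2 / ((1 - d) * exp (g * Lk) / 2))
      with (2 / (1 - d) * exp ((2 * b - g) * Lk)).
    + apply Rmult_le_compat_l; [apply Rmult_le_pos; [lra | left; apply Rinv_0_lt_compat; lra]|].
      apply exp_le_mono. nra.
    + replace ((2 * b - g) * Lk) with (b * Lk + b * Lk + - (g * Lk)) by ring.
      rewrite !exp_plus, exp_Ropp. field. repeat split; try lra; apply Rgt_not_eq, exp_pos.
Qed.

Lemma fail_sum_bound k T : (2 <= k)%nat ->
  Kbig d <= (1 - d) * Rpower (INR k) (gam d) ->
  (1 - d) * Rpower (INR k) (gam d) <= INR k * (1 - d) ^ T ->
  contenders k T <= Rpower (INR k) (bet d) ->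
  ratio d ^ T <= ratio d * Rpower (INR k) (1 - bet d) ->
  fail_sum (fail_bound k T) 0 T <= Cfin d * Rpower (INR k) (- bet d).
Proof.
  intros Hk2 HK F1 F2 F3.
  pose proof (shrink_bounds d Hd). pose proof (ratio_gt1 d Hd) as Hx.
  assert (HkR : 0 < INR k) by (apply lt_0_INR; lia).
  assert (Hgeo : forall t, (t < T)%nat -> fail_bound k T t = C0 d / INR k * ratio d ^ t).
  { intros t Ht. unfold fail_bound, contenders, ratio.
    replace (Nat.ltb t T) with true by (symmetry; apply Nat.ltb_lt; auto).
    rewrite pow_inv. field. split; [apply pow_nonzero|]; lra. }
  rewrite (fail_sum_geometric _ T _ _ Hx Hgeo T 0%nat eq_refl).
  unfold fail_bound at 1. rewrite Nat.ltb_irrefl.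
  pose proof (chebyshev_terms_bound k T Hk2 F3).
  pose proof (markov_term_bound k T Hk2 HK F1 F2).
  unfold Cfin. lra.
Qed.


Lemma phase_step_bound k T J t m : (t < T)%nat ->
  Kbig d <= INR k * (1 - d) ^ t -> INR k <= 2 ^ J -> INR m <= contenders k t ->
  overflow_prob m (nfloor (2 ^ J * (1 - d) ^ t)) (contenders k (S t)) <= fail_bound k T t.
Proof.
  intros Ht HK HkJ Hm. pose proof (d_lt1 d Hd). pose proof (shrink_bounds d Hd).
  destruct (Kbig_gt d Hd) as [HK3 _].
  assert (Hpow : 0 < (1 - d) ^ t) by (apply pow_lt; lra).
  assert (HkR : 0 < INR k) by nra.
  unfold fail_bound. replace (Nat.ltb t T) with true by (symmetry; apply Nat.ltb_lt; auto).
  replace (contenders k (S t)) with (shrink d * contenders k t) by (unfold contenders; cbn; ring).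
  apply (chebyshev_window d Hd (INR k * (1 - d) ^ t)); auto.
  - apply Rmult_le_compat_r; lra.
  - unfold contenders. split; [apply Rmult_lt_0_compat; [lra | apply pow_lt; lra]|].
    apply Rmult_le_compat_l; [lra | apply pow_incr; lra].
Qed.

Lemma phase_last_bound k T J m :
  3 <= INR k * (1 - d) ^ T -> INR k <= 2 ^ J -> INR m <= contenders k T ->
  overflow_prob m (nfloor (2 ^ J * (1 - d) ^ T)) 0 <= fail_bound k T T.
Proof.
  intros HK HkJ Hm. pose proof (d_lt1 d Hd).
  assert (0 <= (1 - d) ^ T) by (apply pow_le; lra).
  assert (INR k * (1 - d) ^ T <= 2 ^ J * (1 - d) ^ T) by (apply Rmult_le_compat_r; lra).
  unfold fail_bound. rewrite Nat.ltb_irrefl.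
  eapply Rle_trans; [apply markov_window; [lra | exact Hm]|].
  unfold Rdiv. apply Rmult_le_compat_l; [apply pow2_ge_0|].
  apply Rinv_le_contravar; lra.
Qed.

Lemma fail_bound_nonneg k T t : (1 <= k)%nat -> 3 <= INR k * (1 - d) ^ T ->
  0 <= fail_bound k T t.
Proof.
  intros Hk HK. pose proof (margin_pos d Hd); pose proof (rb_gt1 d Hd).
  pose proof (shrink_bounds d Hd).
  assert (HkR : 0 < INR k) by (apply lt_0_INR; lia).
  assert (0 < C0 d) by (apply Rdiv_lt_0_compat; [lra | apply pow_lt; lra]).
  assert (0 < contenders k t) by (apply Rmult_lt_0_compat; [lra | apply pow_lt; lra]).
  unfold fail_bound. destruct (Nat.ltb t T).
  - left; apply Rdiv_lt_0_compat; auto.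
  - apply Rmult_le_pos; [apply pow2_ge_0 | left; apply Rinv_0_lt_compat; lra].
Qed.

Lemma main_bound k : (2 <= k)%nat -> Kbig d <= (1 - d) * Rpower (INR k) (gam d) ->
  1 - Cfin d * Rpower (INR k) (- bet d) <= all_delivered_prob d k.
Proof.
  intros Hk2 HK. pose proof (d_lt1 d Hd). destruct (Kbig_gt d Hd) as [HK3 _].
  destruct (horizon d Hd k Hk2) as [T [HT [F1 [F2 F3]]]].
  destruct (first_phase_index k Hk2) as [J [HJ HW0]].
  pose proof (deadline_spec d k (proj1 Hd)) as HD. set (D := deadline d k) in *.
  assert (HkR : 2 <= INR k) by (apply (le_INR 2); lia).
  assert (Hinv : 1 < 1 / d).
  { apply (Rmult_lt_reg_r d); [lra|]. unfold Rdiv; rewrite Rmult_assoc, Rinv_l by lra. lra. }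
  assert (HkD : (k <= D)%nat) by (apply INR_le; nra).
  assert (HTD : (T < D)%nat) by (apply INR_lt; unfold Rdiv in HT; nra).
  assert (Hsize : forall t, (t <= T)%nat -> Kbig d <= INR k * (1 - d) ^ t).
  { intros t Ht. pose proof (pow_antimono (1 - d) t T ltac:(lra) Ht).
    apply Rle_trans with (INR k * (1 - d) ^ T); [lra | apply Rmult_le_compat_l; lra]. }
  pose proof (Hsize T (le_n T)).
  pose proof (fail_sum_bound k T Hk2 HK F1 F2 F3).
  apply Rle_trans with (1 - fail_sum (fail_bound k T) 0 T); [lra|].
  apply (schedule_lb d k J T D (contenders k) (fail_bound k T)); auto; [lra | lia | | | | |].
  - unfold contenders; cbn; lra.
  - intros t Ht. pose proof (Hsize t Ht). assert (0 <= (1 - d) ^ t) by (apply pow_le; lra).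
    assert (INR k * (1 - d) ^ t <= 2 ^ J * (1 - d) ^ t) by (apply Rmult_le_compat_r; lra).
    lra.
  - intros t Ht m Hm. apply phase_step_bound; [auto | apply Hsize; lia | lra | auto].
  - intros m Hm. apply phase_last_bound; [lra | lra | auto].
  - intros t. apply fail_bound_nonneg; [lia | lra].
Qed.

End Assembly.

Lemma eventually_below_power C e : 0 < e ->
  exists k0 : nat, forall k : nat, (k0 <= k)%nat -> C <= Rpower (INR k) e.
Proof.
  intros He. set (X := exp (ln (Rmax C 1) / e)).
  assert (HX : 0 < X) by apply exp_pos.
  exists (S (nfloor X)). intros k Hk.
  destruct (nfloor_spec X) as [N1 _]; [lra|].
  apply le_INR in Hk. rewrite S_INR in Hk.
  apply Rle_trans with (Rmax C 1); [apply Rmax_l|].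
  replace (Rmax C 1) with (Rpower X e).
  - apply Rle_Rpower_l; lra.
  - unfold Rpower, X. rewrite ln_exp.
    replace (e * (ln (Rmax C 1) / e)) with (ln (Rmax C 1)) by (field; lra).
    apply exp_ln. pose proof (Rmax_r C 1). lra.
Qed.

Theorem mainTheorem3 :
  forall delta : R, 0 < delta < 1 / exp 1 ->
  exists c : R, 0 < c /\
  exists k0 : nat, forall k : nat, (k0 <= k)%nat ->
    all_delivered_prob delta k >= 1 - 1 / Rpower (INR k) c.
Proof.
  intros d Hd. pose proof (d_lt1 d Hd). pose proof (bet_bounds d Hd).
  pose proof (gam_ge d Hd).
  exists (bet d / 2). split; [lra|].
  destruct (eventually_below_power (Kbig d / (1 - d)) (gam d)) as [k1 Hk1]; [lra|].
  destruct (eventually_below_power (Cfin d) (bet d / 2)) as [k2 Hk2]; [lra|].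
  exists (max 2 (max k1 k2)). intros k Hk.
  assert (HK : Kbig d <= (1 - d) * Rpower (INR k) (gam d)).
  { specialize (Hk1 k ltac:(lia)).
    apply (Rmult_le_compat_l (1 - d)) in Hk1; [|lra].
    replace ((1 - d) * (Kbig d / (1 - d))) with (Kbig d) in Hk1 by (field; lra). exact Hk1. }
  pose proof (main_bound d Hd k ltac:(lia) HK) as Hmain.
  (* Cfin k^-bet <= k^(bet/2) k^-bet = 1 / k^(bet/2) *)
  assert (Hfail : Cfin d * Rpower (INR k) (- bet d) <= 1 / Rpower (INR k) (bet d / 2)).
  { replace (1 / Rpower (INR k) (bet d / 2)) with
        (Rpower (INR k) (bet d / 2) * Rpower (INR k) (- bet d))
      by (rewrite <- Rpower_plus; replace (bet d / 2 + - bet d) with (- (bet d / 2)) by field;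
          rewrite Rpower_Ropp; unfold Rdiv; ring).
    apply Rmult_le_compat_r; [left; apply exp_pos | apply Hk2; lia]. }
  lra.
Qed.
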